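(* Let $\mathsf P$ be a network coding problem and $q$ a prime power. A rate-capacity tuple $(\lambda,\omega)$ is $0$-achievable subject to the $q$-linearity constraint if and only if \[(\lambda,\omega)\in\mathsf{CL}\big(\mathrm{proj}_{\mathsf P}[\bar\Upsilon^*_q(\mathsf P)\cap\mathcal C_I(\mathsf P)\cap\mathcal C_T(\mathsf P)\cap\mathcal C_D(\mathsf P)]\big).\] (The sources need not be colocated.)
   Context: A network is $\mathsf G=(\mathcal V,\mathcal E)$, $\mathcal V$ a finite set of nodes, $\mathcal E$ a finite set of hyperedges, each $e$ with tail $\mathrm{tail}(e)\in\mathcal V$ and head $\mathrm{head}(e)\subseteq\mathcal V$, without directed cycles (no nonempty sequence of links $f_1,\dots,f_k$ with $\mathrm{tail}(f_i)\in\mathrm{head}(f_{i-1})$ for $i\ge2$ and $\mathrm{tail}(f_1)\in\mathrm{head}(f_k)$). A connection constraint $\mathsf M=(\mathcal S,O,D)$: finite source index set $\mathcal S$, $O:\mathcal S\to2^{\mathcal V}$ (where source $s$ is available), $D:\mathcal S\to2^{\mathcal V}$ (sinks of $s$). $\mathsf P=(\mathsf G,\mathsf M)$. Sources are imaginary edges with $\mathrm{head}(s)=O(s)$; $\mathrm{in}(e)=\{f\in\mathcal S\cup\mathcal E:\mathrm{tail}(e)\in\mathrm{head}(f)\}$, $\mathrm{in}(u)=\{f\in\mathcal S\cup\mathcal E:u\in\mathrm{head}(f)\}$. A $q$-linear network code for $\mathsf P$ is a family of random variables $\{Y_f:f\in\mathcal S\cup\mathcal E\}$ where each $Y_s$ is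 a row vector over $GF(q)$ of some length whose entries are independent and uniform over $GF(q)$, the $Y_s$ are mutually independent, and each $Y_e$ is a row vector over $GF(q)$ that is a $GF(q)$-linear function of $(Y_f:f\in\mathrm{in}(e))$. $\mathrm{SP}(X)$ is the support of $X$. A rate-capacity tuple is $(\lambda,\omega)$, $\lambda:\mathcal S\to\mathbb R_{\ge0}$, $\omega:\mathcal E\to\mathbb R_{\ge0}$; it is $0$-achievable subject to the $q$-linearity constraint if there exist $q$-linear network codes $\{Y^n_f\}$ ($n=1,2,\dots$) and $c_n>0$ with $\lim_nc_n\log|\mathrm{SP}(Y^n_s)|\ge\lambda(s)$ for all $s$, $\lim_nc_n\log|\mathrm{SP}(Y^n_e)|\le\omega(e)$ for all $e$, and $H(Y^n_s\mid Y^n_f,f\in\mathrm{in}(u))=0$ for all $n$, $s$, $u\in D(s)$. For a finite set $\mathcal N$, $\mathcal H[\mathcal N]$ is the set of real functions on subsets of $\mathcal N$; $g(\alpha\mid\beta)=g(\alpha\cup\beta)-g(\beta)$. A function $h\in\mathcal H[\mathcal N]$ is $q$-representable if there are subspaces $\mathbb U_i$ ($i\in\mathcal N$) of a finite-dimensional vector space over $GF(q)$ with $h(\alpha)=\dim\langle\mathbb U_i:i\in\alpha\rangle$ (dimension of their span) for all $\alpha$; weakly $q$-representable if $ch$ is $q$-representable for some $c>0$; almost $q$-representable if it is a limit of weakly $q$-representable functions. $\bar\Upsilon^*_q(\mathsf P)$ is the set of almost $q$-representable functions in $\mathcal H[\mathcal S\cup\mathcal E]$. $\mathcal C_I(\mathsf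 P)=\{h:h(\mathcal S)=\sum_sh(s)\}$, $\mathcal C_T(\mathsf P)=\{h:h(e\mid\mathrm{in}(e))=0\ \forall e\in\mathcal E\}$, $\mathcal C_D(\mathsf P)=\{h:h(s\mid\mathrm{in}(u))=0\ \forall s\in\mathcal S,u\in D(s)\}$. $\mathrm{proj}_{\mathsf P}[h]=(h(s),s\in\mathcal S;h(e),e\in\mathcal E)$, applied elementwise to sets. For a set $\mathcal R$ of tuples, $\mathsf{CL}(\mathcal R)$ is the set of $(\lambda,\omega)$ such that there exist $(\lambda^n,\omega^n)\in\mathcal R$ and $c_n>0$ with $\lim_nc_n\omega^n(e)\le\omega(e)$ and $\lim_nc_n\lambda^n(s)\ge\lambda(s)$ for all $e,s$. *)

From HB Require Import structures.
From mathcomp Require Import all_boot all_order all_algebra.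
From mathcomp Require Import all_classical all_reals all_analysis.
Set Implicit Arguments. Unset Strict Implicit. Unset Printing Implicit Defensive.
Import Order.TTheory GRing.Theory Num.Theory.
Import numFieldNormedType.Exports.
Local Open Scope classical_set_scope.
Local Open Scope ring_scope.

Record problem := Problem {
  pV : finType;
  pE : finType;
  pS : finType;
  ptail : pE -> pV;
  phead : pE -> {set pV};
  pO : pS -> {set pV};              (* where source s is available *)
  pD : pS -> {set pV} }.            (* sinks of source s *)

Definition acyclic (P : problem) : Prop :=
  forall (f : pE P) (p : seq (pE P)),
    path (fun a b => ptail b \in phead a) f p ->
    ptail f \notin phead (last f p).

(* index set S u E (sources are imaginary edges) *)
Definition idx (P : problem) : finType := (pS P + pE P)%type.

Definition headf (P : problem) (f : idx P) : {set pV P} :=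
  match f with inl s => pO s | inr e => phead e end.

Definition in_e (P : problem) (e : pE P) : {set idx P} :=
  [set f : idx P | ptail e \in headf f]%SET.
Definition in_u (P : problem) (u : pV P) : {set idx P} :=
  [set f : idx P | u \in headf f]%SET.

Section Codes.
Variables (P : problem) (F : finFieldType).

Record qcode := QCode {
  ksrc : pS P -> nat;
  kedge : pE P -> nat;
  Yedge : forall e : pE P,
     {dffun forall s : pS P, 'rV[F]_(ksrc s)} -> 'rV[F]_(kedge e) }.

Arguments Yedge : clear implicits.
Definition msg (C : qcode) := {dffun forall s : pS P, 'rV[F]_(ksrc C s)}.

Definition len (C : qcode) (f : idx P) : nat :=
  match f with inl s => ksrc C s | inr e => kedge C e end.

(* Y_f as a function of the (independent, uniform) source messages *)
Definition Yf (C : qcode) (f : idx P) : msg C -> 'rV[F]_(len C f) :=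
  match f as f0 return msg C -> 'rV[F]_(len C f0) with
  | inl s => fun x => x s
  | inr e => Yedge C e
  end.

Definition is_linear_code (C : qcode) : Prop :=
  forall e : pE P, exists A : forall f : idx P, 'M[F]_(len C f, kedge C e),
    forall x : msg C, Yedge C e x = \sum_(f in in_e e) (Yf f x *m A f).

(* support of Y_f : its set of values (the joint source law is uniform,
   hence of full support) *)
Definition SP (C : qcode) (f : idx P) : {set 'rV[F]_(len C f)} :=
  [set Yf f x | x : msg C]%SET.

(* H(Y_s | Y_f, f in in(u)) = 0 for all s and u in D(s): since the joint
   law has full support, this says Y_s is determined by (Y_f, f in in(u)). *)
Definition decodes (C : qcode) : Prop :=
  forall (s : pS P) (u : pV P), u \in pD s ->
  forall x x' : msg C,
    (forall f : idx P, f \in in_u u -> Yf f x = Yf f x') -> x s = x' s.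
End Codes.

Definition zero_achievable_qlin (R : realType) (P : problem) (F : finFieldType)
  (lam : pS P -> R) (om : pE P -> R) : Prop :=
  exists (C : nat -> qcode P F) (c : nat -> R),
    (forall n, is_linear_code (C n)) /\
    (forall n, decodes (C n)) /\
    (forall n, 0 < c n) /\
    (forall s : pS P, exists l : R,
        (fun n => c n * ln (#|SP (C n) (inl s)|)%:R) @ \oo --> l /\ lam s <= l) /\
    (forall e : pE P, exists l : R,
        (fun n => c n * ln (#|SP (C n) (inr e)|)%:R) @ \oo --> l /\ l <= om e).

Section Rep.
Variables (R : realType) (P : problem) (F : finFieldType).
Local Notation H := ({set idx P} -> R).

Definition q_representable (h : H) : Prop :=
  exists (n : nat) (U : idx P -> 'M[F]_n),
    forall A : {set idx P}, h A = (\rank (\sum_(i in A) U i)%MS)%:R.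

Definition weakly_q_representable (h : H) : Prop :=
  exists c : R, 0 < c /\ q_representable (fun A => c * h A).

Definition almost_q_representable (h : H) : Prop :=
  exists hk : nat -> H, (forall k, weakly_q_representable (hk k)) /\
    forall A : {set idx P}, (fun k => hk k A) @ \oo --> h A.

Definition srcs : {set idx P} := [set f : idx P | if f is inl _ then true else false]%SET.

Definition C_I (h : H) : Prop := h srcs = \sum_(s : pS P) h [set (inl s : idx P)]%SET.
Definition C_T (h : H) : Prop :=
  forall e : pE P, h ([set (inr e : idx P)]%SET :|: in_e e) - h (in_e e) = 0.
Definition C_D (h : H) : Prop :=
  forall (s : pS P) (u : pV P), u \in pD s ->
    h ([set (inl s : idx P)]%SET :|: in_u u) - h (in_u u) = 0.

Definition proj_region (lam : pS P -> R) (om : pE P -> R) : Prop :=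
  exists h : H, almost_q_representable h /\ C_I h /\ C_T h /\ C_D h /\
    (forall s, lam s = h [set (inl s : idx P)]%SET) /\ (forall e, om e = h [set (inr e : idx P)]%SET).
End Rep.

Definition CL (R : realType) (P : problem)
  (Rg : (pS P -> R) -> (pE P -> R) -> Prop)
  (lam : pS P -> R) (om : pE P -> R) : Prop :=
  exists (lamn : nat -> pS P -> R) (omn : nat -> pE P -> R) (c : nat -> R),
    (forall n, Rg (lamn n) (omn n)) /\ (forall n, 0 < c n) /\
    (forall e, exists l : R, (fun n => c n * omn n e) @ \oo --> l /\ l <= om e) /\
    (forall s, exists l : R, (fun n => c n * lamn n s) @ \oo --> l /\ lam s <= l).

(* A q-linear code on an acyclic network is, by induction along the links, a
   family of linear maps Y_f = x M_f of the concatenated source vector x.  The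
   column spaces of the M_f give a representable h with log_q |SP(Y_f)| = h(f);
   linearity of the code, decodability and independence of the sources become
   C_T, C_D and C_I.
   Conversely, an almost representable h satisfying the constraints is close to
   (1/c) dim <U_i : i in alpha> for subspaces U_i that violate the constraints
   only slightly.  Quotienting out the parts of the U_i that break C_T and C_D
   makes these exact, so by acyclicity every link space lies in the span of the
   source spaces.  Letting source s carry the part of its space that the other
   sources do not see gives a linear decodable code whose dimensions differ from
   those of the U_i by a bounded multiple of the defects; rescaling and improving
   the approximation yields the closure. *)

From HB Require Import structures.
From mathcomp Require Import all_boot all_order all_algebra.
From mathcomp Require Import all_classical all_reals all_analysis.
From mathcomp Require Import zify lra ring.
Set Implicit Arguments. Unset Strict Implicit. Unset Printing Implicit Defensive.
Import Order.TTheory GRing.Theory Num.Theory.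
Import numFieldNormedType.Exports.
Local Open Scope ring_scope.

Section RowSpaces.
Variable F : fieldType.

Lemma mxrank_bigcap_kermx (I : finType) (P : pred I) n (k : I -> nat)
    (T : forall i, 'M[F]_(n, k i)) :
  \rank (\bigcap_(i | P i) kermx (T i))%MS =
  (n - \rank (\sum_(i | P i) <<(T i)^T>>)%MS)%N.
Proof.
set W := (\bigcap_(i | P i) kermx (T i))%MS.
set X := (\sum_(i | P i) <<(T i)^T>>)%MS.
suff eqWX : (W :=: kermx X^T)%MS by rewrite eqWX mxrank_ker mxrank_tr.
apply/eqmxP/andP; split.
  apply/sub_kermxP; apply: trmx_inj; rewrite trmx_mul trmxK trmx0.
  apply/sub_kermxP/sumsmx_subP => i Pi; rewrite genmxE.
  apply/sub_kermxP; apply: trmx_inj; rewrite trmx_mul !trmxK trmx0.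
  by apply/sub_kermxP; rewrite (bigcapmx_inf i Pi (submx_refl _)).
apply/sub_bigcapmxP => i Pi; apply/sub_kermxP.
set K := kermx X^T.
have sXK : (X <= kermx K^T)%MS.
  apply/sub_kermxP; apply: trmx_inj; rewrite trmx_mul trmxK trmx0; exact: mulmx_ker.
have sTK : ((T i)^T <= kermx K^T)%MS.
  apply: submx_trans sXK; rewrite -(genmxE (T i)^T).
  exact: (sumsmx_sup i Pi (submx_refl _)).
by apply: trmx_inj; rewrite trmx_mul trmx0; apply/sub_kermxP.
Qed.

Lemma mxrank_sumsmx_leq (I : finType) (P : pred I) n (A : I -> 'M[F]_n) :
  (\rank (\sum_(i | P i) A i)%MS <= \sum_(i | P i) \rank (A i))%N.
Proof.
elim/big_ind2: _ => [|a b c d leab lecd|//]; first by rewrite mxrank0.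
by apply: leq_trans (mxrank_adds_leqif a c).1 _; apply: leq_add.
Qed.

Lemma mxrank_leq_mul_coker m n (X : 'M[F]_(m, n)) (N : 'M[F]_n) :
  (\rank X <= \rank (X *m cokermx N) + \rank N)%N.
Proof.
rewrite -{1}(mxrank_mul_ker X (cokermx N)) leq_add2l.
apply: leq_trans (mxrankS (capmxSr _ _)) _.
by rewrite mxrank_ker mxrank_coker subKn // rank_leq_col.
Qed.

Lemma mxrank_diff_leq m1 m2 n (X : 'M[F]_(m1, n)) (Y : 'M[F]_(m2, n)) :
  (X <= Y)%MS -> (\rank (Y :\: X) <= \rank Y - \rank X)%N.
Proof.
move=> sXY; have := mxrank_cap_compl Y X.
have : (\rank X <= \rank (Y :&: X))%N by apply: mxrankS; rewrite sub_capmx sXY submx_refl.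
lia.
Qed.

Lemma submx_diff_adds m1 m2 n (X : 'M[F]_(m1, n)) (Y : 'M[F]_(m2, n)) :
  (Y <= (Y :\: X) + X)%MS.
Proof. by rewrite -{1}(addsmx_diff_cap_eq Y X) addsmxS ?capmxSr. Qed.

Lemma mxrank_mulmx_submx m1 m2 n p (X : 'M[F]_(m1, n)) (Y : 'M[F]_(m2, n))
    (D : 'M[F]_(n, p)) :
  (X <= Y)%MS -> (\rank (Y *m D) <= \rank (X *m D) + (\rank Y - \rank X))%N.
Proof.
move=> sXY; apply: leq_trans (mxrankS (submxMr D (submx_diff_adds X Y))) _.
rewrite addsmxMr; apply: leq_trans (mxrank_adds_leqif _ _).1 _.
rewrite addnC leq_add2l.
exact: leq_trans (mxrankM_maxl _ _) (mxrank_diff_leq sXY).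
Qed.

Lemma mxrank_sumsmx_submx (I : finType) (P : pred I) n (X Y : I -> 'M[F]_n) :
  (forall i, P i -> X i <= Y i)%MS ->
  (\rank (\sum_(i | P i) Y i)%MS <=
    \rank (\sum_(i | P i) X i)%MS + \sum_(i | P i) (\rank (Y i) - \rank (X i)))%N.
Proof.
move=> sXY.
have sYXD : ((\sum_(i | P i) Y i) <=
             (\sum_(i | P i) X i) + \sum_(i | P i) (Y i :\: X i))%MS.
  apply/sumsmx_subP => i Pi; apply: submx_trans (submx_diff_adds (X i) _) _.
  by rewrite addsmxC addsmxS // (sumsmx_sup i Pi (submx_refl _)).
apply: leq_trans (mxrankS sYXD) _; apply: leq_trans (mxrank_adds_leqif _ _).1 _.
rewrite leq_add2l; apply: leq_trans (mxrank_sumsmx_leq _ _) _.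
by apply: leq_sum => i Pi; apply: mxrank_diff_leq; apply: sXY.
Qed.

Lemma sub_sumsmx_trmx (I : finType) (P : pred I) n (A : 'M[F]_n) (B : I -> 'M[F]_n) :
  (A <= \sum_(i | P i) B i)%MS ->
  exists D : I -> 'M[F]_n, A^T = \sum_(i | P i) (B i)^T *m D i.
Proof.
case/sub_sumsmxP => u ->; exists (fun i => (u i)^T).
by rewrite raddf_sum; apply: eq_bigr => i _; apply: trmx_mul.
Qed.

End RowSpaces.

Section Counting.
Variable F : finFieldType.

Lemma card_row_submx m n (M : 'M[F]_(m, n)) :
  #|[set v : 'rV[F]_n | (v <= M)%MS]| = (#|F| ^ \rank M)%N.
Proof.
have -> : [set v : 'rV[F]_n | (v <= M)%MS] = [set u *m row_base M | u in 'rV_(\rank M)].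
  apply/setP => v; rewrite inE -(eq_row_base M); apply/idP/imsetP.
    by case/submxP => D ->; exists D.
  by case=> u _ ->; rewrite submxMl.
rewrite card_imset; last exact: row_free_inj (row_base_free M).
by rewrite card_mx mul1n.
Qed.

Lemma card_image_mulmx m n (M : 'M[F]_(m, n)) :
  #|[set u *m M | u : 'rV[F]_m]| = (#|F| ^ \rank M)%N.
Proof.
rewrite -card_row_submx; apply: eq_card => v; rewrite [RHS]inE.
by apply/imsetP/submxP => -[u]; [move=> _ ->|move=> ->]; exists u.
Qed.

End Counting.

Section Acyclicity.
Variable P : problem.
Hypothesis acyclicP : acyclic P.
Local Notation feeds := (fun a b : pE P => ptail b \in phead a).

Lemma acyclic_path_uniq (f : pE P) p : path feeds f p -> uniq (f :: p).
Proof.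
elim: p f => [//|g p IHp] f; rewrite [path _ _ _]/= => /andP [fg pg].
rewrite cons_uniq (IHp g pg) andbT; apply/negP => pf.
have : path feeds f (g :: p) by rewrite /= fg.
case/splitPr: pf => p1 p2; rewrite cat_path /= => /and3P [p1f lastf _].
by move: (acyclicP p1f); rewrite lastf.
Qed.

Lemma acyclic_ind (Q : pE P -> Prop) :
  (forall e, (forall f : pE P, ptail e \in phead f -> Q f) -> Q e) -> forall e, Q e.
Proof.
move=> IH e; apply: contrapT => nQe.
have long_path k : exists f p, [/\ size p = k, path feeds f p &
    forall g, g \in f :: p -> ~ Q g].
  elim: k => [|k [f [p [szp pfp nQp]]]].
    by exists e, [::]; split => // g; rewrite inE => /eqP ->.
  have [f' [ff' nQf']] : exists f', ptail f \in phead f' /\ ~ Q f'.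
    apply: contrapT => noQ; apply: (nQp f (mem_head _ _)); apply: IH => f' ff'.
    by apply: contrapT => nQf'; apply: noQ; exists f'.
  exists f', (f :: p); split; rewrite /= ?szp ?ff' ?pfp //.
  by move=> g; rewrite inE => /predU1P [-> //|]; apply: nQp.
have [f [p [szp pfp _]]] := long_path #|pE P|.
have := max_card (mem (f :: p)).
by move/card_uniqP: (acyclic_path_uniq pfp) => ->; rewrite /= szp ltnn.
Qed.

End Acyclicity.

Section Messages.
Variables (F : finFieldType) (I : finType) (k : I -> nat).
Local Notation message := {dffun forall i, 'rV[F]_(k i)}.

Lemma card_image_component (s : I) : #|[set x s | x : message]| = (#|F| ^ k s)%N.
Proof.
have -> : [set x s | x : message] = [set: 'rV[F]_(k s)].
  apply/setP => v; rewrite inE; apply/imsetP.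
  exists (finfun (@dfwith _ (fun j => 'rV[F]_(k j)) (fun j => 0) s v)) => //.
  by rewrite ffunE /dfwith; case: eqP => // eqss; rewrite eq_axiomK.
by rewrite cardsT card_mx mul1n.
Qed.

Lemma card_image_sum_mulmx p (L : forall i, 'M[F]_(k i, p)) :
  #|[set \sum_i x i *m L i | x : message]| = (#|F| ^ \rank (\sum_i <<L i>>)%MS)%N.
Proof.
rewrite -card_row_submx; apply: eq_card => v; rewrite [RHS]inE.
apply/imsetP/idP => [[x _ ->]|].
  by apply: summx_sub_sums => i _; rewrite genmxE submxMl.
case/sub_sumsmxP => u ->.
exists (finfun (fun i => u i *m <<L i>>%MS *m pinvmx (L i))) => //.
apply: eq_bigr => i _; rewrite ffunE mulmxKpV //.
by rewrite -(genmxE (L i)) submxMl.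
Qed.

(* Messages are flattened into one row vector, the blocks listed along [enum I]. *)
Definition msg_dim := (\sum_(j < #|I|) k (enum_val j))%N.

Definition msg_flat (x : message) : 'rV[F]_msg_dim := mxrow (fun j => x (enum_val j)).

(* [conform_mx] replaces a cast, the block sizes being equal only propositionally. *)
Definition msg_unflat (X : 'rV[F]_msg_dim) : message :=
  finfun (fun i => conform_mx (0 : 'rV[F]_(k i)) (submxrow X (enum_rank i))).

Lemma msg_unflatK : cancel msg_unflat msg_flat.
Proof.
move=> X; apply/mxrowP => j; rewrite mxrowK ffunE.
suff conform_block j' (eqj : j' = j) :
    conform_mx (0 : 'rV[F]_(k (enum_val j))) (submxrow X j') = submxrow X j.
  exact: conform_block (enum_valK j).
by rewrite eqj conform_mx_id.
Qed.

Definition msg_sel (s : I) : 'M[F]_(msg_dim, k s) :=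
  mxcol (fun j => if enum_val j == s
    then conform_mx (0 : 'M[F]_(k (enum_val j), k s)) (1%:M : 'M[F]_(k (enum_val j)))
    else 0).

Lemma msg_flat_sel (x : message) s : msg_flat x *m msg_sel s = x s.
Proof.
rewrite mul_mxrow_mxcol (bigD1 (enum_rank s)) //= big1 ?addr0; last first.
  move=> j nj; case: eqP => [ej|]; last by rewrite mulmx0.
  by case/negP: nj; rewrite -ej enum_valK.
suff sel_block s' (eqs : s' = s) : x s' *m (if s' == s
    then conform_mx (0 : 'M[F]_(k s', k s)) (1%:M : 'M[F]_(k s')) else 0) = x s.
  exact: sel_block (enum_rankK s).
by rewrite eqs eqxx conform_mx_id mulmx1.
Qed.

Lemma msg_dimE : msg_dim = (\sum_i k i)%N.
Proof. by rewrite /msg_dim (big_enum_val (A := predT) k). Qed.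

End Messages.

Section LinearCodeRank.
Variables (P : problem) (F : finFieldType) (C : qcode P F).
Hypotheses (acyclicP : acyclic P) (linC : is_linear_code C) (decC : decodes C).

Local Notation N := (msg_dim (ksrc C)).
Local Notation flat := (@msg_flat F (pS P) (ksrc C)).
Local Notation unflat := (@msg_unflat F (pS P) (ksrc C)).

Lemma global_encoding_edge (e : pE P) : exists M : 'M[F]_(N, kedge C e),
  forall x : msg C, @Yedge _ _ C e x = flat x *m M.
Proof.
elim/(acyclic_ind acyclicP): e => e IH.
have Min g : exists M : 'M[F]_(N, kedge C g),
    ptail e \in phead g -> forall x : msg C, @Yedge _ _ C g x = flat x *m M.
  by case: (boolP (ptail e \in phead g)) => [/IH [M eqM]|_]; [exists M | exists 0].
pose Mf (f : idx P) : 'M[F]_(N, len C f) :=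
  match f with inl s => msg_sel F (ksrc C) s | inr g => sval (cid (Min g)) end.
have YfM f : f \in in_e e -> forall x : msg C, Yf f x = flat x *m Mf f.
  case: f => [s|g] fin x /=; first by rewrite msg_flat_sel.
  by apply: (svalP (cid (Min g))); rewrite inE in fin.
have [A eqA] := linC e; exists (\sum_(f in in_e e) Mf f *m A f) => x.
by rewrite eqA mulmx_sumr; apply: eq_bigr => f fin; rewrite YfM // mulmxA.
Qed.

Lemma global_encoding (f : idx P) : exists M : 'M[F]_(N, len C f),
  forall x : msg C, Yf f x = flat x *m M.
Proof.
case: f => [s|e] /=; last exact: global_encoding_edge.
by exists (msg_sel F (ksrc C) s) => x; rewrite msg_flat_sel.
Qed.

Definition genc f := sval (cid (global_encoding f)).

Lemma gencE f x : Yf f x = flat x *m genc f.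
Proof. exact: (svalP (cid (global_encoding f))). Qed.

Definition code_rank (A : {set idx P}) := \rank (\sum_(i in A) <<(genc i)^T>>)%MS.

Lemma code_rank_setU1 (A : {set idx P}) (j : idx P) :
  (forall X : 'rV[F]_N, (forall f, f \in A -> X *m genc f = 0) -> X *m genc j = 0) ->
  code_rank ([set j] :|: A) = code_rank A.
Proof.
move=> kerAj.
have eq_ker : \rank (\bigcap_(i in [set j] :|: A) kermx (genc i))%MS =
              \rank (\bigcap_(i in A) kermx (genc i))%MS.
  apply/eqP; rewrite eqn_leq !mxrankS //.
    apply/sub_bigcapmxP => i; rewrite !inE => /predU1P [->|iA].
      apply/row_subP => r; apply/sub_kermxP; apply: kerAj => f fA.
      by apply/sub_kermxP; rewrite (submx_trans (row_sub r _)) ?(bigcapmx_inf f fA).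
    exact: (bigcapmx_inf i iA).
  by apply/sub_bigcapmxP => i iA; apply: (bigcapmx_inf i); rewrite ?inE ?iA ?orbT.
move/eqP: eq_ker; rewrite !(mxrank_bigcap_kermx (fun i => i \in _)).
by rewrite eqn_sub2lE ?rank_leq_col // => /eqP.
Qed.

Lemma code_rank_CT e : code_rank ([set inr e] :|: in_e e) = code_rank (in_e e).
Proof.
apply: code_rank_setU1 => X kerX; rewrite -(msg_unflatK X) -gencE /=.
have [A ->] := linC e; apply: big1 => f fin.
by rewrite gencE msg_unflatK kerX // mul0mx.
Qed.

Lemma code_rank_CD s u : u \in pD s ->
  code_rank ([set inl s] :|: in_u u) = code_rank (in_u u).
Proof.
move=> us; apply: code_rank_setU1 => X kerX.
rewrite -(msg_unflatK X) -gencE /=.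
have -> : unflat X s = unflat 0 s.
  by apply: (decC us) => f fin; rewrite !gencE !msg_unflatK kerX // mul0mx.
by have := gencE (inl s) (unflat 0); rewrite msg_unflatK mul0mx /= => ->.
Qed.

Lemma card_SP_code_rank f : #|SP C f| = (#|F| ^ code_rank [set f])%N.
Proof.
rewrite /code_rank big_set1 mxrank_gen mxrank_tr -card_image_mulmx.
apply: eq_card => v; apply/imsetP/imsetP => -[x _ ->].
  by exists (flat x); rewrite ?gencE.
by exists (unflat x); rewrite ?gencE ?msg_unflatK.
Qed.

Lemma code_rank_src s : code_rank [set inl s] = ksrc C s.
Proof.
have := card_SP_code_rank (inl s); rewrite /SP /= card_image_component.
by move/eqP; rewrite eqn_exp2l ?card_finNzRing_gt1 // => /eqP.
Qed.

(* The flattened message is read off the sources, so their spaces span everything. *)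
Lemma code_rank_CI : code_rank (srcs P) = (\sum_s code_rank [set inl s])%N.
Proof.
under eq_bigr do rewrite code_rank_src.
rewrite -msg_dimE.
have ker0 : (\bigcap_(i in srcs P) kermx (genc i) <= (0 : 'M[F]_N))%MS.
  apply/row_subP => r; set X := row r _.
  have kerX s : X *m genc (inl s) = 0.
    apply/sub_kermxP; apply: submx_trans (row_sub r _) _.
    by apply: (bigcapmx_inf (inl s)); rewrite ?inE.
  suff -> : X = 0 by rewrite sub0mx.
  rewrite -(msg_unflatK X); apply/mxrowP => j; rewrite mxrowK.
  have := gencE (inl (enum_val j)) (unflat X); rewrite msg_unflatK kerX /= => ->.
  by apply/matrixP => a b; rewrite !mxE.
move: (mxrankS ker0); rewrite mxrank0 leqn0 (mxrank_bigcap_kermx (fun i => i \in _)).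
by rewrite subn_eq0 => geN; apply/eqP; rewrite eqn_leq rank_leq_col.
Qed.

End LinearCodeRank.

Section RepresentationCode.
Variables (P : problem) (F : finFieldType) (n : nat) (U : idx P -> 'M[F]_n).
Hypothesis acyclicP : acyclic P.

Definition span (A : {set idx P}) := (\sum_(i in A) U i)%MS.
Definition rk (A : {set idx P}) := \rank (span A).

(* The parts of link and sink spaces outside the span of their inputs, i.e. the
   violation of C_T and C_D; right multiplication by its cokernel removes it. *)
Definition defect : 'M[F]_n :=
  ((\sum_e (U (inr e) :\: span (in_e e))) +
   \sum_(p : pS P * pV P | p.2 \in pD p.1) (U (inl p.1) :\: span (in_u p.2)))%MS.

Definition Uq i := U i *m cokermx defect.
Definition Tq i := (Uq i)^T.

Lemma Uq_sub_span (a : idx P) (A : {set idx P}) :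
  (U a :\: span A <= defect)%MS -> (Uq a <= \sum_(i in A) Uq i)%MS.
Proof.
move=> sDa; have sUa : (U a <= defect + span A)%MS.
  exact: submx_trans (submx_diff_adds _ _) (addsmxS sDa (submx_refl _)).
apply: submx_trans (submxMr _ sUa) _.
by rewrite addsmxMr mulmx_coker adds0mx_id /span sumsmxMr.
Qed.

Lemma Uq_CT e : (Uq (inr e) <= \sum_(i in in_e e) Uq i)%MS.
Proof.
apply: Uq_sub_span; apply: submx_trans (addsmxSl _ _).
exact: (sumsmx_sup e isT (submx_refl _)).
Qed.

Lemma Uq_CD s u : u \in pD s -> (Uq (inl s) <= \sum_(i in in_u u) Uq i)%MS.
Proof.
move=> us; apply: Uq_sub_span; apply: submx_trans (addsmxSr _ _).
exact: (sumsmx_sup (s, u) us (submx_refl _)).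
Qed.

Lemma Uq_edge_sub_srcs e : (Uq (inr e) <= \sum_t Uq (inl t))%MS.
Proof.
elim/(acyclic_ind acyclicP): e => e IH.
apply: submx_trans (Uq_CT e) _; apply/sumsmx_subP => -[t|f] fin.
  exact: (sumsmx_sup t isT (submx_refl _)).
by apply: IH; rewrite inE in fin.
Qed.

(* Source [s] carries the part of [Tq (inl s)] seen on vectors that the other
   sources read as zero. *)
Definition src_ker s := (\bigcap_(t | t != s) kermx (Tq (inl t)))%MS.
Definition src_img s := src_ker s *m Tq (inl s).
Definition src_dim s := \rank (src_img s).
Definition src_basis s : 'M[F]_(src_dim s, n) := row_base (src_img s).
Definition src_gen s : 'M[F]_(src_dim s, n) :=
  src_basis s *m pinvmx (src_img s) *m src_ker s.
Definition code_input (x : {dffun forall s, 'rV[F]_(src_dim s)}) :=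
  \sum_s x s *m src_gen s.

Lemma src_gen_self s : src_gen s *m Tq (inl s) = src_basis s.
Proof. by rewrite -mulmxA mulmxKpV // /src_basis eq_row_base. Qed.

Lemma src_gen_other s t : t != s -> src_gen s *m Tq (inl t) = 0.
Proof.
move=> ts; apply/sub_kermxP; apply: submx_trans (submxMl _ _) _.
exact: (bigcapmx_inf t ts (submx_refl _)).
Qed.

Lemma code_input_src x t : code_input x *m Tq (inl t) = x t *m src_basis t.
Proof.
rewrite /code_input mulmx_suml (bigD1 t) //= -mulmxA src_gen_self big1 ?addr0 //.
by move=> s st; rewrite -mulmxA src_gen_other ?mulmx0 // eq_sym.
Qed.

Definition rep_code : qcode P F :=
  @QCode P F src_dim (fun _ => n) (fun e x => code_input x *m Tq (inr e)).

Lemma rep_code_linear : is_linear_code rep_code.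
Proof.
move=> e; have [D eqD] := sub_sumsmx_trmx (Uq_CT e).
pose A (f : idx P) : 'M[F]_(len rep_code f, n) :=
  match f with inl t => src_basis t *m D (inl t) | inr g => D (inr g) end.
exists A => x /=; rewrite /Tq eqD mulmx_sumr.
apply: eq_bigr => -[t|f] _; last by rewrite mulmxA.
by rewrite mulmxA -/(Tq (inl t)) code_input_src -mulmxA.
Qed.

Lemma rep_code_decodes : decodes rep_code.
Proof.
move=> s u us x x' eqY; apply: (row_free_inj (row_base_free (src_img s))).
rewrite -/(src_basis s) -!code_input_src.
have [E eqE] := sub_sumsmx_trmx (Uq_CD us); rewrite /Tq eqE !mulmx_sumr.
apply: eq_bigr => -[t|f] fin; rewrite !mulmxA; have /= := eqY _ fin.
  by rewrite -/(Tq (inl t)) !code_input_src => ->.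
by move=> ->.
Qed.

Definition edge_dim e := \rank (\sum_s <<src_gen s *m Tq (inr e)>>)%MS.

Definition indep_defect := (\sum_t rk [set inl t] - rk (srcs P))%N.

Definition dep_defect :=
  (\sum_e (rk ([set inr e] :|: in_e e) - rk (in_e e)) +
   \sum_(p : pS P * pV P | p.2 \in pD p.1)
      (rk ([set inl p.1] :|: in_u p.2) - rk (in_u p.2)))%N.

Lemma rk_set1 f : rk [set f] = \rank (U f).
Proof. by rewrite /rk /span big_set1. Qed.

Lemma span_srcs : span (srcs P) = (\sum_t U (inl t))%MS.
Proof.
rewrite /span (big_sumType _ (fun i => i \in srcs P)) /=.
rewrite [X in (_ + X)%MS]big_pred0 => [|e]; last by rewrite inE.
by rewrite addsmx0_id; apply: eq_bigl => t; rewrite inE.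
Qed.

Lemma span_setU1 (a : idx P) (A : {set idx P}) :
  (span ([set a] :|: A) :=: U a + span A)%MS.
Proof.
apply/eqmxP/andP; split.
  apply/sumsmx_subP => i; rewrite !inE => /predU1P [->|iA]; first exact: addsmxSl.
  by apply: submx_trans (addsmxSr _ _); apply: (sumsmx_sup i iA).
rewrite addsmx_sub; apply/andP; split.
  by apply: (sumsmx_sup a); rewrite ?inE ?eqxx.
by apply/sumsmx_subP => i iA; apply: (sumsmx_sup i); rewrite ?inE ?iA ?orbT.
Qed.

Lemma mxrank_diff_span a A : \rank (U a :\: span A) = (rk ([set a] :|: A) - rk A)%N.
Proof.
rewrite /rk span_setU1.
have := mxrank_sum_cap (U a) (span A); have := mxrank_cap_compl (U a) (span A).
lia.
Qed.

Lemma mxrank_defect_leq : (\rank defect <= dep_defect)%N.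
Proof.
apply: leq_trans (mxrank_adds_leqif _ _).1 _.
apply: leq_add; apply: leq_trans (mxrank_sumsmx_leq _ _) _;
  by apply: leq_sum => i _; rewrite mxrank_diff_span.
Qed.

Lemma src_dim_leq s : (src_dim s <= rk [set inl s])%N.
Proof.
rewrite rk_set1; apply: leq_trans (mxrankM_maxr _ _) _.
by rewrite mxrank_tr; apply: mxrankM_maxl.
Qed.

Lemma rk_srcs_leq s :
  (rk (srcs P) <= src_dim s + \sum_(t | t != s) \rank (Uq (inl t)) + \rank defect)%N.
Proof.
have capE : (src_ker s :&: kermx (Tq (inl s)))%MS = (\bigcap_t kermx (Tq (inl t)))%MS.
  by rewrite [RHS](bigD1 s) //= capmxC.
have := mxrank_mul_ker (src_ker s) (Tq (inl s)); rewrite capE.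
rewrite /src_ker !(mxrank_bigcap_kermx _ (fun t => Tq (inl t))) -/(src_img s).
have := rank_leq_col (\sum_(t | t != s) <<(Tq (inl t))^T>>)%MS.
have := rank_leq_col (\sum_t <<(Tq (inl t))^T>>)%MS.
have : (\rank (\sum_(t | t != s) <<(Tq (inl t))^T>>)%MS <=
        \sum_(t | t != s) \rank (Uq (inl t)))%N.
  apply: leq_trans (mxrank_sumsmx_leq _ _) _; apply: leq_sum => t _.
  by rewrite mxrank_gen /Tq trmxK.
have : (rk (srcs P) <= \rank (\sum_t <<(Tq (inl t))^T>>)%MS + \rank defect)%N.
  rewrite /rk span_srcs; apply: leq_trans (mxrank_leq_mul_coker _ defect) _.
  rewrite leq_add2r -genmx_sums mxrank_gen mxrankS // sumsmxMr.
  by apply/sumsmx_subP => t _; rewrite (sumsmx_sup t) // /Tq trmxK.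
set a := \rank (\sum_(t | t != s) _)%MS; set b := \rank (\sum_t _)%MS.
rewrite /src_dim; lia.
Qed.

Lemma mxrank_Uq_src_leq s :
  (\rank (Uq (inl s)) <= src_dim s + (indep_defect + \rank defect))%N.
Proof.
have := rk_srcs_leq s.
have : (\rank (Uq (inl s)) + \sum_(t | t != s) \rank (Uq (inl t)) <= \sum_t rk [set inl t])%N.
  rewrite [leqLHS](_ : _ = \sum_t \rank (Uq (inl t)))%N; last by rewrite [RHS](bigD1 s).
  by apply: leq_sum => t _; rewrite rk_set1 mxrankM_maxl.
rewrite /indep_defect; lia.
Qed.

Lemma mxrank_Uq_edge_leq e :
  (\rank (Uq (inr e)) <= edge_dim e + #|pS P| * (indep_defect + \rank defect))%N.
Proof.
have [D eqD] := sub_sumsmx_trmx (Uq_edge_sub_srcs e).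
have sBT t : (src_basis t <= Tq (inl t))%MS by rewrite /src_basis eq_row_base submxMl.
have -> : edge_dim e = \rank (\sum_t <<src_basis t *m D t>>)%MS.
  congr (\rank _); apply: eq_bigr => t _; congr (<<_>>%MS).
  rewrite /Tq eqD mulmx_sumr (bigD1 t) //= mulmxA -/(Tq _) src_gen_self big1 ?addr0 //.
  by move=> u ut; rewrite mulmxA -/(Tq _) src_gen_other ?mul0mx.
have sTD : ((Uq (inr e))^T <= \sum_t <<Tq (inl t) *m D t>>)%MS.
  by rewrite eqD; apply: summx_sub_sums => t _; rewrite genmxE.
rewrite -mxrank_tr; apply: leq_trans (mxrankS sTD) _.
apply: leq_trans (mxrank_sumsmx_submx (X := fun t => <<src_basis t *m D t>>%MS) _) _.
  by move=> t _; rewrite !genmxE submxMr.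
rewrite leq_add2l -sum_nat_const leq_sum // => t _; rewrite !mxrank_gen.
have := mxrank_mulmx_submx (D t) (sBT t); have := mxrank_Uq_src_leq t.
rewrite /src_basis eq_row_base -/(src_dim t) /Tq mxrank_tr => leUq leTD.
by rewrite leq_subLR (leq_trans leTD) // leq_add2l leq_subLR.
Qed.

Lemma edge_dim_leq e : (edge_dim e <= rk [set inr e])%N.
Proof.
rewrite rk_set1; apply: leq_trans (mxrankM_maxl _ (cokermx defect)).
rewrite -/(Uq _) -mxrank_tr mxrankS //; apply/sumsmx_subP => s _.
by rewrite genmxE submxMl.
Qed.

Definition rep_dim (f : idx P) :=
  match f with inl s => src_dim s | inr e => edge_dim e end.

Lemma card_SP_rep_code f : #|SP rep_code f| = (#|F| ^ rep_dim f)%N.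
Proof.
case: f => [s|e]; first by rewrite /SP /= card_image_component.
rewrite -card_image_sum_mulmx; apply: eq_card => v.
apply/imsetP/imsetP => -[x _ ->]; exists x => //;
  by rewrite /= /code_input mulmx_suml; apply: eq_bigr => i _; rewrite mulmxA.
Qed.

Lemma rep_dim_leq f : (rep_dim f <= rk [set f])%N.
Proof. by case: f => [s|e]; [apply: src_dim_leq | apply: edge_dim_leq]. Qed.

Lemma rk_set1_leq f :
  (rk [set f] <= rep_dim f + #|pS P|.+2 * (indep_defect + \rank defect))%N.
Proof.
rewrite rk_set1; apply: leq_trans (mxrank_leq_mul_coker _ defect) _; rewrite -/(Uq f).
case: f => [s|e] /=; rewrite !mulSn.
  have := mxrank_Uq_src_leq s; set r := \rank defect; lia.
have := mxrank_Uq_edge_leq e; set r := \rank defect; set m := #|pS P|; lia.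
Qed.

End RepresentationCode.

Section Distances.
Variable R : realFieldType.

Lemma natr_subn_leq_dist (a b : nat) : ((a - b)%N%:R : R) <= `|a%:R - b%:R|.
Proof.
case: (leqP b a) => [ba|/ltnW]; first by rewrite natrB // ger0_norm // subr_ge0 ler_nat.
by rewrite -subn_eq0 => /eqP ->; rewrite normr_ge0.
Qed.

Lemma natr_subn_leq_scaled (a b : nat) (c x y : R) : 0 < c ->
  a%:R = c * x -> b%:R = c * y -> ((a - b)%N%:R : R) <= c * `|x - y|.
Proof.
move=> c_gt0 ax by'; apply: le_trans (natr_subn_leq_dist a b) _.
by rewrite ax by' -mulrBr normrM gtr0_norm.
Qed.

Lemma dist_sandwich (a b X M : nat) (c : R) : 0 < c ->
  (a <= b <= a + M * X)%N -> `|a%:R / c - b%:R / c| <= M%:R * (X%:R / c).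
Proof.
move=> c_gt0 /andP [ab bMX].
have normVc : `|c^-1| = c^-1 by rewrite gtr0_norm ?invr_gt0.
rewrite -mulrBl normrM normVc distrC ger0_norm ?subr_ge0 ?ler_nat // mulrA.
rewrite ler_wpM2r ?invr_ge0 ?(ltW c_gt0) //.
by rewrite -natrM lerBlDl -natrD ler_nat.
Qed.

Lemma dist_mulr_leq (c x y k : R) : 0 < c -> 0 < k ->
  `|x - y| <= (k * c)^-1 -> `|c * x - c * y| <= k^-1.
Proof.
move=> c_gt0 k_gt0 xy; rewrite -mulrBr normrM gtr0_norm //.
apply: le_trans (ler_wpM2l (ltW c_gt0) xy) _.
by rewrite invfM mulrCA mulfV ?gt_eqF // mulr1.
Qed.

End Distances.

Local Open Scope classical_set_scope.
Local Open Scope ring_scope.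

Lemma cvg_dist_harmonic (R : realType) (u v : nat -> R) (l : R) : v @ \oo --> l ->
  (forall n, `|u n - v n| <= n.+1%:R^-1) -> u @ \oo --> l.
Proof.
move=> v_l uv.
have -> : u = v + (u - v) by apply: funext => n /=; rewrite addrC subrK.
rewrite -[l]addr0; apply: cvgD => //.
apply: (@squeeze_cvgr _ _ _ _ (fun n => - harmonic n) harmonic).
- by apply: nearW => n /=; rewrite -ler_norml; apply: uv.
- by rewrite -oppr0; apply: cvgN; apply: cvg_harmonic.
- exact: cvg_harmonic.
Qed.

Section Rates.
Variables (R : realType) (P : problem) (F : finFieldType).
Hypothesis acyclicP : acyclic P.

Local Notation q := (#|F|%:R : R).

Lemma q_gt1 : 1 < q.
Proof. by rewrite ltr1n card_finNzRing_gt1. Qed.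

Lemma ln_q_gt0 : 0 < ln q.
Proof. exact: ln_gt0 q_gt1. Qed.

Lemma ln_natr_card_exp (k : nat) : ln ((#|F| ^ k)%N%:R : R) = ln q * k%:R.
Proof. by rewrite natrX lnXn ?mulr_natr // (lt_trans ltr01 q_gt1). Qed.

Lemma code_rank_region (C : qcode P F) (linC : is_linear_code C) :
  decodes C -> proj_region F (fun s => (code_rank acyclicP linC [set inl s]%SET)%:R : R)
                             (fun e => (code_rank acyclicP linC [set inr e]%SET)%:R).
Proof.
move=> decC; exists (fun A => (code_rank acyclicP linC A)%:R).
split; [|split; [|split; [|split]]] => //.
- exists (fun _ A => (code_rank acyclicP linC A)%:R); split=> [_|A]; last exact: cvg_cst.
  exists 1; split => //; exists (msg_dim (ksrc C)), (fun i => <<(genc acyclicP linC i)^T>>%MS).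
  by move=> A; rewrite mul1r.
- by rewrite /C_I code_rank_CI natr_sum.
- by move=> e; rewrite code_rank_CT subrr.
- by move=> s u us; rewrite code_rank_CD // subrr.
Qed.

Lemma achievable_CL (lam : pS P -> R) (om : pE P -> R) :
  zero_achievable_qlin F lam om -> CL (proj_region F) lam om.
Proof.
move=> [C [c [linC [decC [c_gt0 [lam_lim om_lim]]]]]].
pose h n f : R := (code_rank acyclicP (linC n) [set f]%SET)%:R.
have rateE f : (fun n => c n * ln q * h n f) = (fun n => c n * ln (#|SP (C n) f|)%:R).
  by apply: funext => n; rewrite card_SP_code_rank ln_natr_card_exp /h mulrA.
exists (fun n s => h n (inl s)), (fun n e => h n (inr e)), (fun n => c n * ln q).
split; [|split; [|split]].
- by move=> n; apply: code_rank_region.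
- by move=> n; rewrite mulr_gt0 ?ln_q_gt0.
- by move=> e; rewrite rateE.
- by move=> s; rewrite rateE.
Qed.

Lemma almost_rep_near (h : {set idx P} -> R) (eta : R) :
  almost_q_representable F h -> 0 < eta ->
  exists (c : R) n (U : idx P -> 'M[F]_n),
    0 < c /\ forall A, `|h A - (rk U A)%:R / c| < eta.
Proof.
move=> [hk [hk_rep hk_lim]] eta_gt0.
have [k near_k] : exists k, forall A, `|h A - hk k A| < eta.
  have : \forall k \near \oo, forall A, `|h A - hk k A| < eta.
    by apply: filter_forall => A; move: (hk_lim A) => /cvgr_dist_lt /(_ _ eta_gt0).
  by case=> N _ nearN; exists N; apply: nearN => /=.
have [c [c_gt0 [n [U hU]]]] := hk_rep k.
by exists c, n, U; split => // A; rewrite /rk /span -hU mulrC mulKf ?gt_eqF.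
Qed.

(* C_I costs [eta] per source plus one, each C_T and C_D constraint [2 eta]. *)
Definition defect_weight : R :=
  (#|pS P|.+1)%:R + \sum_(e : pE P) 2 + \sum_(p : pS P * pV P | p.2 \in pD p.1) 2.

Lemma defect_weight_ge0 : 0 <= defect_weight.
Proof. by rewrite !addr_ge0 // sumr_ge0. Qed.

Lemma defects_small (h : {set idx P} -> R) (c eta : R) n (U : idx P -> 'M[F]_n) :
  C_I h -> C_T h -> C_D h -> 0 < c -> (forall A, `|h A - (rk U A)%:R / c| < eta) ->
  ((indep_defect U + dep_defect U)%N%:R : R) <= c * eta * defect_weight.
Proof.
move=> hI hT hD c_gt0 near_h; pose y A := (rk U A)%:R / c.
have rkE A : (rk U A)%:R = c * y A by rewrite /y mulrC divfK ?gt_eqF.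
have pair_leq a b : h a - h b = 0 -> ((rk U a - rk U b)%N%:R : R) <= c * eta * 2.
  move=> hab; apply: le_trans (natr_subn_leq_scaled c_gt0 (rkE a) (rkE b)) _.
  rewrite -mulrA ler_wpM2l ?(ltW c_gt0) //.
  move: (near_h a) (near_h b); rewrite -/(y a) -/(y b) !ltr_norml ler_norml.
  move=> /andP [? ?] /andP [? ?]; apply/andP; split; lra.
rewrite natrD /defect_weight !mulrDr -addrA; apply: lerD.
  have sumE : ((\sum_t rk U [set inl t]%SET)%N%:R : R) = c * \sum_t y [set inl t]%SET.
    by rewrite natr_sum mulr_sumr; apply: eq_bigr => t _; apply: rkE.
  apply: le_trans (natr_subn_leq_scaled c_gt0 sumE (rkE _)) _.
  rewrite -mulrA ler_wpM2l ?(ltW c_gt0) //.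
  have -> : \sum_t y [set inl t]%SET - y (srcs P) =
    \sum_t (y [set inl t]%SET - h [set inl t]%SET) + (h (srcs P) - y (srcs P)).
    by rewrite hI sumrB; ring.
  apply: le_trans (ler_normD _ _) _; rewrite mulr_natr mulrSr.
  apply: lerD; last exact: ltW (near_h _).
  apply: le_trans (ler_norm_sum _ _ _) _; rewrite -sumr_const.
  by apply: ler_sum => t _; rewrite distrC ltW.
rewrite /dep_defect natrD !natr_sum !mulr_sumr.
by apply: lerD; apply: ler_sum => i Di; apply: pair_leq; [apply: hT | apply: hD].
Qed.

Lemma region_code_approx (h : {set idx P} -> R) (eps : R) :
  almost_q_representable F h -> C_I h -> C_T h -> C_D h -> 0 < eps ->
  exists (C : qcode P F) (d : R), [/\ is_linear_code C, decodes C, 0 < d &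
    forall f, `|d * ln (#|SP C f|)%:R - h [set f]%SET| <= eps].
Proof.
move=> h_rep hI hT hD eps_gt0; pose M := #|pS P|.+2.
pose eta := eps / (M%:R * defect_weight + 1).
have weight_gt0 : 0 < M%:R * defect_weight + 1 by rewrite ltr_wpDl ?mulr_ge0 ?defect_weight_ge0.
have eta_gt0 : 0 < eta by rewrite divr_gt0.
have [c [n [U [c_gt0 near_h]]]] := almost_rep_near h_rep eta_gt0.
have X_small := defects_small hI hT hD c_gt0 near_h.
pose X := (indep_defect U + \rank (defect U))%N.
have XcE : X%:R / c <= eta * defect_weight.
  rewrite ler_pdivrMr // [leRHS](_ : _ = c * eta * defect_weight); last by ring.
  by apply: le_trans X_small; rewrite ler_nat leq_add2l mxrank_defect_leq.
exists (rep_code U), (c * ln q)^-1; split.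
- exact: rep_code_linear.
- exact: rep_code_decodes.
- by rewrite invr_gt0 mulr_gt0 ?ln_q_gt0.
move=> f; rewrite card_SP_rep_code ln_natr_card_exp.
have -> : (c * ln q)^-1 * (ln q * (rep_dim U f)%:R) = (rep_dim U f)%:R / c.
  by field; rewrite !gt_eqF ?ln_q_gt0.
have := dist_sandwich c_gt0 (introT andP (conj (rep_dim_leq U f) (rk_set1_leq U acyclicP f))).
have := near_h [set f]%SET.
have -> : eps = eta * (M%:R * defect_weight + 1) by rewrite divfK ?gt_eqF.
have MX : M%:R * (X%:R / c) <= M%:R * (eta * defect_weight) by rewrite ler_wpM2l.
move: MX; rewrite -/X -/M ltr_norml !ler_norml => MX /andP [? ?] /andP [? ?].
apply/andP; split; lra.
Qed.

Lemma CL_achievable (lam : pS P -> R) (om : pE P -> R) :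
  CL (proj_region F) lam om -> zero_achievable_qlin F lam om.
Proof.
move=> [lamn [omn [c [reg [c_gt0 [om_lim lam_lim]]]]]].
have code_n n : exists Cd : qcode P F * R, [/\ is_linear_code Cd.1, decodes Cd.1, 0 < Cd.2,
    forall s, `|c n * (Cd.2 * ln (#|SP Cd.1 (inl s)|)%:R) - c n * lamn n s| <= n.+1%:R^-1 &
    forall e, `|c n * (Cd.2 * ln (#|SP Cd.1 (inr e)|)%:R) - c n * omn n e| <= n.+1%:R^-1].
  have [h [h_rep [hI [hT [hD [lamE omE]]]]]] := reg n.
  have eps_gt0 : 0 < (n.+1%:R * c n)^-1 by rewrite invr_gt0 mulr_gt0.
  have [C [d [linC decC d_gt0 close]]] := region_code_approx h_rep hI hT hD eps_gt0.
  exists (C, d); split => //= [s|e]; rewrite ?lamE ?omE; apply: (@dist_mulr_leq R) => //.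
  - by have := close (inl s).
  - by have := close (inr e).
have [Cd Cd_spec] := choice code_n.
exists (fun n => (Cd n).1), (fun n => c n * (Cd n).2).
split; [|split; [|split; [|split]]] => [n|n|n|s|e].
- by case: (Cd_spec n).
- by case: (Cd_spec n).
- by case: (Cd_spec n) => _ _ d_gt0 _ _; rewrite mulr_gt0.
- have [l [lim_l le_l]] := lam_lim s; exists l; split => //.
  apply: (cvg_dist_harmonic lim_l) => n; rewrite -mulrA; by case: (Cd_spec n).
- have [l [lim_l le_l]] := om_lim e; exists l; split => //.
  apply: (cvg_dist_harmonic lim_l) => n; rewrite -mulrA; by case: (Cd_spec n).
Qed.

End Rates.

Unset Implicit Arguments.

Theorem theorem4 (R : realType) (P : problem) (F : finFieldType)
  (hP : acyclic P) (lam : pS P -> R) (om : pE P -> R)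
  (hlam : forall s, 0 <= lam s) (hom : forall e, 0 <= om e) :
  @zero_achievable_qlin R P F lam om <->
  @CL R P (@proj_region R P F) lam om.
Proof. by split; [apply: achievable_CL | apply: CL_achievable]. Qed.
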